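(* Let $(\mathbf f,\mathbf g)$ be a vector admissible system with potential $U$. For $(\mathbf x,\epsilon)\in\mathcal X\times\mathcal E$ let $\mathbf y=\mathbf f(\mathbf g(\mathbf x);\epsilon)$. If $\mathbf x\preceq\mathbf y$ or $\mathbf x\succeq\mathbf y$, then $U(\mathbf x;\epsilon)\ge U(\mathbf y;\epsilon)$.
   Context: Let $d\in\mathbb N$, $\mathcal X=[0,1]^d$, $\mathcal E=[0,1]$, $\mathcal X^\circ=\mathcal X\setminus\{\mathbf 0\}$. Vectors are row vectors; $\mathbf x\preceq\mathbf y$ means $x_i\le y_i$ for all $i$. For a vector-valued function $\mathbf h$ of $\mathbf x$, $\mathbf h'(\mathbf x)$ denotes its Jacobian matrix $[\partial h_i/\partial x_j]_{i,j}$; for a scalar function $F(\mathbf x;\epsilon)$, $F'(\mathbf x;\epsilon)$ denotes its gradient in $\mathbf x$ (a row vector). Let $\mathbf D$ be a $d\times d$ diagonal matrix with positive diagonal entries, $\mathbf f:\mathcal X\times\mathcal E\to\mathcal X$, $\mathbf g:\mathcal X\to\mathcal X$, and $F:\mathcal X\times\mathcal E\to\mathbb R$, $G:\mathcal X\to\mathbb R$ functionals with $F'(\mathbf x;\epsilon)=\mathbf f(\mathbf x;\epsilon)\mathbf D$ and $G'(\mathbf x)=\mathbf g(\mathbf x)\mathbf D$, normalized so that $F(\mathbf 0;\epsilon)=G(\mathbf 0)=0$. The pair $(\mathbf f,\mathbf g)$ is a vector admissible system if: (i) $\mathbf f,\mathbf g$ are twice continuously differentiable; (ii) $\mathbf f(\mathbf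 x;\epsilon)$ and $\mathbf g(\mathbf x)$ are non-decreasing in $\mathbf x$ with respect to $\preceq$; (iii) for each $\mathbf x\in\mathcal X^\circ$, $\mathbf f(\mathbf x;\epsilon)$ is strictly increasing in $\epsilon$, i.e. $\epsilon_1<\epsilon_2$ implies $\mathbf f(\mathbf x;\epsilon_1)\preceq\mathbf f(\mathbf x;\epsilon_2)$ and $\mathbf f(\mathbf x;\epsilon_1)\neq\mathbf f(\mathbf x;\epsilon_2)$; (iv) $\mathbf f(\mathbf 0;\epsilon)=\mathbf f(\mathbf x;0)=\mathbf g(\mathbf 0)=\mathbf 0$ and $F(\mathbf x;0)=0$. The associated recursion is $\mathbf x^{(\ell+1)}=\mathbf f(\mathbf g(\mathbf x^{(\ell)});\epsilon)$. The potential function is $U(\mathbf x;\epsilon)=\mathbf g(\mathbf x)\mathbf D\mathbf x^{\mathsf T}-G(\mathbf x)-F(\mathbf g(\mathbf x);\epsilon)$. *)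

From Stdlib Require Import Reals.
From mathcomp Require Import ssreflect ssrbool ssrfun eqtype ssrnat seq choice fintype.
Set Implicit Arguments. Unset Strict Implicit. Unset Printing Implicit Defensive.
Local Open Scope R_scope.

Definition vec (I : finType) := I -> R.

Definition sumI (I : finType) (h : I -> R) : R := foldr Rplus 0 (map h (enum I)).

Definition in_cube (I : finType) (x : vec I) : Prop := forall i, 0 <= x i <= 1.

Definition vle (I : finType) (x y : vec I) : Prop := forall i, x i <= y i.

Definition vzero (I : finType) : vec I := fun _ => 0.

Definition upd (I : finType) (x : vec I) (i : I) (v : R) : vec I :=
  fun j => if j == i then v else x j.

Definition has_partial (I : finType) (h : vec I -> R) (x : vec I) (i : I) (l : R) : Prop :=
  forall eps, 0 < eps -> exists delta, 0 < delta /\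
    forall t, t <> 0 -> Rabs t < delta -> in_cube (upd x i (x i + t)) ->
      Rabs ((h (upd x i (x i + t)) - h x) / t - l) < eps.

Definition cont_on_cube (I : finType) (h : vec I -> R) : Prop :=
  forall x, in_cube x -> forall eps, 0 < eps -> exists delta, 0 < delta /\
    forall y, in_cube y -> (forall j, Rabs (y j - x j) < delta) -> Rabs (h y - h x) < eps.

Definition C1_on_cube (I : finType) (h : vec I -> R) : Prop :=
  exists p : I -> vec I -> R,
    (forall i x, in_cube x -> has_partial h x i (p i x)) /\
    (forall i, cont_on_cube (p i)).

Definition C2_on_cube (I : finType) (h : vec I -> R) : Prop :=
  exists p : I -> vec I -> R,
    (forall i x, in_cube x -> has_partial h x i (p i x)) /\
    (forall i, C1_on_cube (p i)).

Definition in_E (e : R) : Prop := 0 <= e <= 1.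

(* Vector admissible system (f,g) with diagonal matrix D = diag(Dd) and functionals F, G
   satisfying F' = f D, G' = g D, F(0;e) = G(0) = 0. *)
Definition vector_admissible (d : nat) (Dd : 'I_d -> R)
    (f : vec 'I_d -> R -> vec 'I_d)
    (g : vec 'I_d -> vec 'I_d)
    (F : vec 'I_d -> R -> R) (G : vec 'I_d -> R) : Prop :=
  (forall i, 0 < Dd i) /\
  (forall x e, in_cube x -> in_E e -> in_cube (f x e)) /\
  (forall x, in_cube x -> in_cube (g x)) /\
  (forall x e, in_cube x -> in_E e -> forall i,
      has_partial (fun z => F z e) x i (f x e i * Dd i)) /\
  (forall x, in_cube x -> forall i, has_partial G x i (g x i * Dd i)) /\
  (forall e, in_E e -> F (@vzero 'I_d) e = 0) /\
  G (@vzero 'I_d) = 0 /\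
  (* (i) f (jointly in (x, e) on X x E) and g are twice continuously differentiable *)
  (forall k, C2_on_cube (fun z : vec (option 'I_d) =>
                           f (fun i => z (Some i)) (z None) k)) /\
  (forall k, C2_on_cube (fun x => g x k)) /\
  (forall x y e, in_cube x -> in_cube y -> in_E e -> vle x y -> vle (f x e) (f y e)) /\
  (forall x y, in_cube x -> in_cube y -> vle x y -> vle (g x) (g y)) /\
  (forall x e1 e2, in_cube x -> (exists i, x i <> 0) -> in_E e1 -> in_E e2 -> e1 < e2 ->
      vle (f x e1) (f x e2) /\ exists i, f x e1 i <> f x e2 i) /\
  (forall e, in_E e -> f (@vzero 'I_d) e = @vzero 'I_d) /\
  (forall x, in_cube x -> f x 0 = @vzero 'I_d) /\
  g (@vzero 'I_d) = @vzero 'I_d /\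
  (forall x, in_cube x -> F x 0 = 0).

Definition potential (d : nat) (Dd : 'I_d -> R)
    (g : vec 'I_d -> vec 'I_d)
    (F : vec 'I_d -> R -> R) (G : vec 'I_d -> R)
    (x : vec 'I_d) (e : R) : R :=
  sumI (fun i => g x i * Dd i * x i) - G x - F (g x) e.

(* For a functional H on the cube whose gradient is h D with h monotone (D a
   positive diagonal matrix), H lies above its "tangent plane" at any point, as long
   as one only compares points that are ordered by ≼:
       H(b) - H(a) >= sum_i h(a)_i D_i (b_i - a_i)   whenever a ≼ b or b ≼ a.
   This follows from two-sided bounds on H(b) - H(a) for a ≼ b, obtained by moving
   from a to b one coordinate at a time and applying the mean value theorem on each
   segment, where monotonicity of h controls the intermediate partial derivatives.
   With y = f(g(x)) we have the exact identity
       U(x) - U(y) = [G(y) - G(x) - g(x) D (y-x)^T] + [F(g y) - F(g x) - y D (g y - g x)^T],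
   and since f(g(x)) = y, both brackets are tangent-plane gaps, for G at x and for
   F(.;e) at g(x); they are nonnegative because x, y are comparable and hence so are
   g(x), g(y). *)

From Stdlib Require Import Reals Lra FunctionalExtensionality.
From mathcomp Require Import ssreflect ssrbool ssrfun eqtype ssrnat seq choice fintype.
From Coquelicot Require Import Coquelicot.
Set Implicit Arguments. Unset Strict Implicit. Unset Printing Implicit Defensive.
Local Open Scope R_scope.

Definition deriv_within (phi : R -> R) (p q t l : R) : Prop :=
  forall eps, 0 < eps -> exists delta, 0 < delta /\
    forall h, h <> 0 -> Rabs h < delta -> p <= t + h <= q ->
      Rabs ((phi (t + h) - phi t) / h - l) < eps.

(* The projection of R onto [p, q]; composing with it extends a function on [p, q]
   to all of R without changing it on [p, q]. *)
Definition clamp (p q t : R) : R := Rmax p (Rmin q t).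

Lemma clamp_id p q t : p <= t <= q -> clamp p q t = t.
Proof. by move=> Ht; rewrite /clamp /Rmax /Rmin; repeat case: Rle_dec; lra. Qed.

Lemma clamp_in p q t : p <= q -> p <= clamp p q t <= q.
Proof. by move=> Hpq; rewrite /clamp /Rmax /Rmin; repeat case: Rle_dec; lra. Qed.

Lemma clamp_dist p q s t : p <= t <= q -> Rabs (clamp p q s - t) <= Rabs (s - t).
Proof.
by move=> Ht; rewrite /clamp /Rmax /Rmin; repeat case: Rle_dec;
  rewrite /Rabs; repeat case: Rcase_abs; lra.
Qed.

Lemma deriv_within_lipschitz phi p q t l : deriv_within phi p q t l ->
  exists delta, 0 < delta /\ forall h, Rabs h < delta -> p <= t + h <= q ->
    Rabs (phi (t + h) - phi t) <= (Rabs l + 1) * Rabs h.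
Proof.
move=> Hd; have [delta [Hdelta Hquot]] := Hd 1 Rlt_0_1.
exists delta; split => // h Hh Hin.
case: (Req_dec h 0) => [-> | Hh0].
  by rewrite Rplus_0_r Rminus_diag Rabs_R0 Rmult_0_r; lra.
have Hslope := Hquot h Hh0 Hh Hin.
replace (phi (t + h) - phi t) with ((phi (t + h) - phi t) / h * h) by (field; exact Hh0).
rewrite Rabs_mult; apply: Rmult_le_compat_r; first exact: Rabs_pos.
by have := Rabs_triang_inv ((phi (t + h) - phi t) / h) l; lra.
Qed.

Section IntervalMeanValue.
Variables (phi dphi : R -> R) (p q : R).
Hypothesis deriv_phi : forall t, p <= t <= q -> deriv_within phi p q t (dphi t).

Lemma clamped_continuity t : p <= t <= q -> continuity_pt (fun s => phi (clamp p q s)) t.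
Proof.
move=> Ht eps Heps.
have [delta [Hdelta Hlip]] := deriv_within_lipschitz (deriv_phi Ht).
set K := Rabs (dphi t) + 1.
have HK : 0 < K by have := Rabs_pos (dphi t); rewrite /K; lra.
exists (Rmin delta (eps / K)); split.
  by apply: Rmin_pos => //; apply: Rdiv_lt_0_compat.
move=> s [_ Hs]; rewrite /= /R_dist in Hs |- *; rewrite (clamp_id Ht).
have Hpq : p <= q by lra.
have Hnear : Rabs (clamp p q s - t) <= Rabs (s - t) := clamp_dist s Ht.
have Hdelta' : Rabs (s - t) < delta := Rlt_le_trans _ _ _ Hs (Rmin_l _ _).
have Heps' : Rabs (s - t) < eps / K := Rlt_le_trans _ _ _ Hs (Rmin_r _ _).
have Hinc := Hlip (clamp p q s - t) ltac:(lra)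
  ltac:(replace (t + (clamp p q s - t)) with (clamp p q s) by ring; exact: clamp_in).
replace (t + (clamp p q s - t)) with (clamp p q s) in Hinc by ring.
have : K * Rabs (clamp p q s - t) < K * (eps / K) by apply: Rmult_lt_compat_l; lra.
by replace (K * (eps / K)) with eps by (field; lra); fold K in Hinc; lra.
Qed.

Lemma clamped_derive t : p < t < q -> is_derive (fun s => phi (clamp p q s)) t (dphi t).
Proof.
move=> Ht; apply/is_derive_Reals => eps Heps.
have [delta [Hdelta Hquot]] := deriv_phi (conj (Rlt_le _ _ (proj1 Ht)) (Rlt_le _ _ (proj2 Ht))) Heps.
have Hpos : 0 < Rmin delta (Rmin (t - p) (q - t)).
  by apply: Rmin_pos => //; apply: Rmin_pos; lra.
exists (mkposreal _ Hpos) => /= h Hh0 Hh.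
have Hh1 : Rabs h < delta := Rlt_le_trans _ _ _ Hh (Rmin_l _ _).
have Hh2 : Rabs h < Rmin (t - p) (q - t) := Rlt_le_trans _ _ _ Hh (Rmin_r _ _).
have Hh3 : Rabs h < t - p := Rlt_le_trans _ _ _ Hh2 (Rmin_l _ _).
have Hh4 : Rabs h < q - t := Rlt_le_trans _ _ _ Hh2 (Rmin_r _ _).
have Hth : p <= t + h <= q by move: Hh3 Hh4; rewrite /Rabs; case: Rcase_abs; lra.
by rewrite (clamp_id Hth) (@clamp_id p q t) //; [exact: Hquot | lra].
Qed.

Lemma mean_value_within : p <= q ->
  exists c, p <= c <= q /\ phi q - phi p = dphi c * (q - p).
Proof.
move=> Hpq; case: (Req_dec p q) => [<- | Hne].
  by exists p; split; [lra | ring].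
have Hlt : p < q by lra.
have Hmin : Rmin p q = p by apply: Rmin_left; lra.
have Hmax : Rmax p q = q by apply: Rmax_right; lra.
have Hder : forall t, Rmin p q < t < Rmax p q ->
    is_derive (fun s => phi (clamp p q s)) t (dphi t).
  by rewrite Hmin Hmax => t Ht; apply: clamped_derive.
have Hcont : forall t, Rmin p q <= t <= Rmax p q ->
    continuity_pt (fun s => phi (clamp p q s)) t.
  by rewrite Hmin Hmax; exact: clamped_continuity.
have [c [Hc Heq]] := MVT_gen _ _ _ _ Hder Hcont.
rewrite Hmin Hmax in Hc; exists c; split => //.
by rewrite !clamp_id in Heq; lra.
Qed.

End IntervalMeanValue.

Section Coordinates.
Variable I : finType.

Lemma upd_eq (x : vec I) i v : upd x i v i = v.
Proof. by rewrite /upd eqxx. Qed.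

Lemma upd_upd (x : vec I) i v w : upd (upd x i v) i w = upd x i w.
Proof. by apply: functional_extensionality => j; rewrite /upd; case: (j == i). Qed.

Lemma upd_same (x : vec I) i : upd x i (x i) = x.
Proof. by apply: functional_extensionality => j; rewrite /upd; case: eqP => [->|]. Qed.

Lemma cube_upd (x : vec I) i v : in_cube x -> 0 <= v <= 1 -> in_cube (upd x i v).
Proof. by move=> Hx Hv j; rewrite /upd; case: (j == i). Qed.

Lemma cube_between (a b z : vec I) :
  in_cube a -> in_cube b -> vle a z -> vle z b -> in_cube z.
Proof. by move=> Ha Hb Haz Hzb j; move: (Ha j) (Hb j) (Haz j) (Hzb j); lra. Qed.

Lemma between_upd (a b z : vec I) i c : vle a z -> vle z b -> a i <= c <= b i ->
  vle a (upd z i c) /\ vle (upd z i c) b.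
Proof.
move=> Haz Hzb Hc; split=> j; rewrite /upd; case: eqP => [-> | _] //; lra.
Qed.

Lemma coordinate_deriv_within (H : vec I -> R) (z : vec I) i p q t l :
  in_cube z -> 0 <= p -> q <= 1 -> p <= t <= q -> has_partial H (upd z i t) i l ->
  deriv_within (fun s => H (upd z i s)) p q t l.
Proof.
move=> Hz Hp Hq Ht Hpart eps Heps.
have [delta [Hdelta Hquot]] := Hpart eps Heps.
exists delta; split => // h Hh0 Hh Hin.
have := Hquot h Hh0 Hh; rewrite upd_eq upd_upd; apply.
by apply: cube_upd => //; lra.
Qed.

End Coordinates.

Section FiniteSums.
Variable I : finType.

Lemma sumI_ext (u v : I -> R) : (forall i, u i = v i) -> sumI u = sumI v.
Proof. by move=> E; rewrite /sumI; elim: (enum I) => //= x s ->; rewrite E. Qed.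

Lemma sumI_add (u v : I -> R) : sumI (fun i => u i + v i) = sumI u + sumI v.
Proof. by rewrite /sumI; elim: (enum I) => /= [|x s ->]; ring. Qed.

Lemma sumI_opp (u : I -> R) : sumI (fun i => - u i) = - sumI u.
Proof. by rewrite /sumI; elim: (enum I) => /= [|x s ->]; ring. Qed.

Lemma sumI_eq0 (u : I -> R) : (forall i, u i = 0) -> sumI u = 0.
Proof. by move=> E; rewrite /sumI; elim: (enum I) => //= x s ->; rewrite E; ring. Qed.

Lemma weighted_pairing_change (w u v a b : vec I) :
  sumI (fun i => u i * w i * a i) - sumI (fun i => v i * w i * b i) =
  - (sumI (fun i => u i * w i * (b i - a i)) + sumI (fun i => b i * w i * (v i - u i))).
Proof.
suff : sumI (fun i => u i * w i * a i) + - sumI (fun i => v i * w i * b i)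
     + sumI (fun i => u i * w i * (b i - a i)) + sumI (fun i => b i * w i * (v i - u i)) = 0
  by lra.
by rewrite -sumI_opp -!sumI_add; apply: sumI_eq0 => i; ring.
Qed.

End FiniteSums.

Section MonotoneGradient.
Variable I : finType.
Variables (Dd : I -> R) (H : vec I -> R) (h : vec I -> vec I).
Hypothesis Dd_pos : forall i, 0 < Dd i.
Hypothesis H_grad : forall z, in_cube z -> forall i, has_partial H z i (h z i * Dd i).
Hypothesis h_mono : forall z w, in_cube z -> in_cube w -> vle z w -> vle (h z) (h w).

Lemma coordinate_step (a b z : vec I) i :
  in_cube a -> in_cube b -> vle a z -> vle z b -> z i = a i ->
  h a i * Dd i * (b i - a i) <= H (upd z i (b i)) - H z <= h b i * Dd i * (b i - a i).
Proof.
move=> Ha Hb Haz Hzb Hzi.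
have Hz := cube_between Ha Hb Haz Hzb.
have [Hai Hbi] := (Ha i, Hb i).
have Hab : a i <= b i by move: (Haz i) (Hzb i); lra.
have deriv_line : forall t, a i <= t <= b i ->
    deriv_within (fun s => H (upd z i s)) (a i) (b i) t (h (upd z i t) i * Dd i).
  move=> t Ht; apply: coordinate_deriv_within => //; try lra.
  by apply: H_grad; apply: cube_upd => //; lra.
have [c [Hc Hmvt]] := mean_value_within deriv_line Hab.
rewrite -Hzi upd_same in Hmvt; rewrite Hmvt Hzi.
have [Hac Hcb] := between_upd Haz Hzb Hc.
have Hzc : in_cube (upd z i c) by apply: cube_upd => //; lra.
have Hlo := h_mono Ha Hzc Hac i.
have Hhi := h_mono Hzc Hb Hcb i.
have Hstep : 0 <= Dd i * (b i - a i) by apply: Rmult_le_pos; [exact: Rlt_le | lra].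
by split; rewrite !Rmult_assoc; apply: Rmult_le_compat_r.
Qed.

Fixpoint stair (a b : vec I) (s : seq I) : vec I :=
  if s is i :: s' then upd (stair a b s') i (b i) else a.

Lemma stair_val a b s j : stair a b s j = if j \in s then b j else a j.
Proof.
elim: s => [|i s IH] //=; rewrite in_cons /upd.
by case: eqP => [-> | _] /=; rewrite ?eqxx.
Qed.

Definition sum_seq (s : seq I) (u : I -> R) : R := foldr Rplus 0 (map u s).

Lemma staircase_bounds (a b : vec I) (s : seq I) :
  in_cube a -> in_cube b -> vle a b -> uniq s ->
  sum_seq s (fun i => h a i * Dd i * (b i - a i)) <= H (stair a b s) - H a <=
  sum_seq s (fun i => h b i * Dd i * (b i - a i)).
Proof.
move=> Ha Hb Hab; elim: s => [|i s IH] /=; first by rewrite /sum_seq /=; lra.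
move=> /andP [Hi /IH Hs].
have Haz : vle a (stair a b s).
  by move=> j; rewrite stair_val; case: (j \in s); [exact: Hab | lra].
have Hzb : vle (stair a b s) b.
  by move=> j; rewrite stair_val; case: (j \in s); [lra | exact: Hab].
have Hzi : stair a b s i = a i by rewrite stair_val (negbTE Hi).
have := coordinate_step Ha Hb Haz Hzb Hzi.
by rewrite /sum_seq /= in Hs |- *; lra.
Qed.

Lemma monotone_gradient_bounds (a b : vec I) : in_cube a -> in_cube b -> vle a b ->
  sumI (fun i => h a i * Dd i * (b i - a i)) <= H b - H a <=
  sumI (fun i => h b i * Dd i * (b i - a i)).
Proof.
move=> Ha Hb Hab.
have Hfull : stair a b (enum I) = b.
  by apply: functional_extensionality => j; rewrite stair_val mem_enum.
by have := staircase_bounds Ha Hb Hab (enum_uniq I); rewrite Hfull.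
Qed.

Lemma tangent_plane_comparable (a b : vec I) :
  in_cube a -> in_cube b -> vle a b \/ vle b a ->
  sumI (fun i => h a i * Dd i * (b i - a i)) <= H b - H a.
Proof.
move=> Ha Hb [Hab | Hba]; first by case: (monotone_gradient_bounds Ha Hb Hab).
have [_ Hup] := monotone_gradient_bounds Hb Ha Hba.
have Hflip : sumI (fun i => h a i * Dd i * (a i - b i))
           = - sumI (fun i => h a i * Dd i * (b i - a i)).
  by rewrite -sumI_opp; apply: sumI_ext => i; ring.
by rewrite Hflip in Hup; lra.
Qed.

End MonotoneGradient.

Theorem lemma2 (d : nat) (Dd : 'I_d -> R)
    (f : vec 'I_d -> R -> vec 'I_d)
    (g : vec 'I_d -> vec 'I_d)
    (F : vec 'I_d -> R -> R) (G : vec 'I_d -> R) :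
  vector_admissible Dd f g F G ->
  forall (x : vec 'I_d) (e : R), in_cube x -> in_E e ->
  (vle x (f (g x) e) \/ vle (f (g x) e) x) ->
  potential Dd g F G x e >= potential Dd g F G (f (g x) e) e.
Proof.
move=> [HD [Hf [Hg [HF' [HG' [_ [_ [_ [_ [Hfm [Hgm _]]]]]]]]]]] x e Hx He Hxy.
set y := f (g x) e.
have Hy : in_cube y by apply: Hf => //; apply: Hg.
have Hgxy : vle (g x) (g y) \/ vle (g y) (g x).
  by case: Hxy => Hxy; [left | right]; apply: Hgm.
(* tangent-plane gaps of G at x and of F(.;e) at g(x), whose slope there is f(g x) = y *)
have gapG : sumI (fun i : 'I_d => g x i * Dd i * (y i - x i)) <= G y - G x
  := tangent_plane_comparable HD HG' Hgm Hx Hy Hxy.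
have gapF : sumI (fun i : 'I_d => y i * Dd i * (g y i - g x i)) <= F (g y) e - F (g x) e
  := tangent_plane_comparable HD (fun z Hz => HF' z e Hz He)
       (fun z w Hz Hw Hzw => Hfm z w e Hz Hw He Hzw) (Hg x Hx) (Hg y Hy) Hgxy.
have Hpair : sumI (fun i : 'I_d => g x i * Dd i * x i) - sumI (fun i : 'I_d => g y i * Dd i * y i)
  = - (sumI (fun i : 'I_d => g x i * Dd i * (y i - x i))
       + sumI (fun i : 'I_d => y i * Dd i * (g y i - g x i)))
  := weighted_pairing_change Dd (g x) (g y) x y.
(* name the two pairing sums so that their occurrences in the unfolded potential,
   which present the index type 'I_d differently, are identified with those above *)
rewrite /potential.
set Sx := sumI (fun i => g x i * Dd i * x i) in Hpair *.
set Sy := sumI (fun i => g y i * Dd i * y i) in Hpair *.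
lra.
Qed.
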